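(* For each slim semimodular lattice $L$ there exist a finite cyclic group $G$ and composition series $\vec H$ and $\vec K$ of $G$ such that $L$ is isomorphic to the dual of the lattice $(\mathrm{CSL}(\vec H,\vec K);\subseteq)$. Conversely, for every group $G$ of finite composition length and any composition series $\vec H$ and $\vec K$ of $G$, the dual of $(\mathrm{CSL}(\vec H,\vec K);\subseteq)$ is a slim semimodular lattice.
   Context: For composition series $\vec H\colon\{1\}=H_0\triangleleft\dots\triangleleft H_n=G$ and $\vec K\colon\{1\}=K_0\triangleleft\dots\triangleleft K_n=G$ of a group $G$, $\mathrm{CSL}(\vec H,\vec K)=\{H_i\cap K_j:0\le i,j\le n\}$ ordered by set inclusion; it is a lattice. A finite lattice is slim if its join-irreducible elements (including $0$) contain no three-element antichain; it is semimodular if $a\prec b$ implies $a\vee c\preceq b\vee c$. *)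

From Stdlib Require Import List.
Set Implicit Arguments.

Record group := Group {
  gcar :> Type;
  gmul : gcar -> gcar -> gcar;
  gone : gcar;
  ginv : gcar -> gcar;
  gmulA : forall x y z, gmul x (gmul y z) = gmul (gmul x y) z;
  gmul1 : forall x, gmul gone x = x;
  gmulV : forall x, gmul (ginv x) x = gone
}.

Definition subgroup {G : group} (A : G -> Prop) : Prop :=
  A (gone G) /\ (forall x y, A x -> A y -> A (gmul G x y)) /\
  (forall x, A x -> A (ginv G x)).

Definition subset {G : group} (A B : G -> Prop) : Prop := forall x, A x -> B x.

Definition same_set {G : group} (A B : G -> Prop) : Prop := forall x, A x <-> B x.

Definition normal_in {G : group} (A B : G -> Prop) : Prop :=
  forall x y, B y -> A x -> A (gmul G (ginv G y) (gmul G x y)).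

(* B/A is a simple group, for A normal in B: A is a maximal proper normal
   subgroup of B (correspondence theorem). *)
Definition simple_quotient {G : group} (B A : G -> Prop) : Prop :=
  (exists x, B x /\ ~ A x) /\
  forall N : G -> Prop, subgroup N -> subset A N -> subset N B -> normal_in N B ->
    same_set N A \/ same_set N B.

Definition composition_series {G : group} (n : nat) (H : nat -> G -> Prop) : Prop :=
  (forall x, H 0 x <-> x = gone G) /\
  (forall x, H n x) /\
  (forall i, i <= n -> subgroup (H i)) /\
  (forall i, i < n ->
     subset (H i) (H (S i)) /\ normal_in (H i) (H (S i)) /\
     simple_quotient (H (S i)) (H i)).

Definition CSL {G : group} (n : nat) (H K : nat -> G -> Prop) : Type :=
  { A : G -> Prop | exists i j, i <= n /\ j <= n /\ A = (fun x => H i x /\ K j x) }.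

Definition CSL_dual_le {G : group} (n : nat) (H K : nat -> G -> Prop)
  (A B : CSL n H K) : Prop := forall x, proj1_sig B x -> proj1_sig A x.

Definition finite_type (T : Type) : Prop := exists s : list T, forall x, In x s.

Fixpoint gpow {G : group} (g : G) (k : nat) : G :=
  match k with O => gone G | S k' => gmul G g (gpow g k') end.

Definition cyclic_group (G : group) : Prop :=
  exists g : G, forall x : G, exists k : nat, x = gpow g k \/ x = ginv G (gpow g k).

Section Poset.
Variables (X : Type) (le : X -> X -> Prop).

Definition partial_order : Prop :=
  (forall x, le x x) /\ (forall x y, le x y -> le y x -> x = y) /\
  (forall x y z, le x y -> le y z -> le x z).

Definition is_join (x y j : X) : Prop :=
  le x j /\ le y j /\ forall u, le x u -> le y u -> le j u.

Definition is_meet (x y m : X) : Prop :=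
  le m x /\ le m y /\ forall u, le u x -> le u y -> le u m.

Definition finite_lattice : Prop :=
  partial_order /\ finite_type X /\ inhabited X /\
  (forall x y, exists j, is_join x y j) /\ (forall x y, exists m, is_meet x y m).

Definition lt (x y : X) : Prop := le x y /\ x <> y.

Definition covers (a b : X) : Prop :=
  lt a b /\ forall z, le a z -> le z b -> z = a \/ z = b.

(* join-irreducible; note that 0 satisfies this, as in the paper *)
Definition join_irreducible (x : X) : Prop :=
  forall y z, is_join y z x -> x = y \/ x = z.

Definition incomparable (x y : X) : Prop := ~ le x y /\ ~ le y x.

Definition slim : Prop :=
  ~ exists a b c, join_irreducible a /\ join_irreducible b /\ join_irreducible c /\
      incomparable a b /\ incomparable a c /\ incomparable b c.

Definition semimodular : Prop :=
  forall a b c ac bc, covers a b -> is_join a c ac -> is_join b c bc ->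
    ac = bc \/ covers ac bc.

Definition slim_semimodular_lattice : Prop :=
  finite_lattice /\ slim /\ semimodular.
End Poset.

Definition order_isomorphic (X Y : Type) (leX : X -> X -> Prop) (leY : Y -> Y -> Prop) : Prop :=
  exists (f : X -> Y) (g : Y -> X),
    (forall x, g (f x) = x) /\ (forall y, f (g y) = y) /\
    (forall x1 x2, leX x1 x2 <-> leY (f x1) (f x2)).

(* For composition series [H] and [K] of a group, call [k] an H-label of
   [H i :&: K j] if it meets [H (k+1)] outside [H k].  Schreier's refinement
   argument shows that these label sets determine the subgroups, that meets of
   subgroups become intersections of label sets, and that one step along [H]
   or [K] adds at most one label; so the dual of CSL(H, K) is a lattice of
   sets closed under intersection in which covers differ by one element, which
   is semimodular.  Its join-irreducibles lie in the two chains [H i] and [K j],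
   whence slimness.

   Conversely, in a slim semimodular lattice a cover [x < y] is separated by a
   unique meet-irreducible, so [x] is represented by the set of
   meet-irreducibles not above [x]: joins become unions and every maximal
   chain adds one element at each step.  By Dilworth's theorem the
   join-irreducibles lie on two chains, which extend to maximal chains [u] and
   [v], and every element is the join of a member of each.  Pick distinct
   primes [p k] for the [n] labels and let the label set [S] correspond to the
   subgroup of [Z / (prod_k p k)] of the multiples of all [p k], [k] in [S]:
   then [u] and [v] become two composition series of this cyclic group whose
   intersections realise the dual of the lattice. *)

From Pilot Require Import Defs.
From Stdlib Require Import Classical ClassicalEpsilon FunctionalExtensionality
  PropExtensionality Arith Lia List.

Lemma nat_crossing (Q : nat -> Prop) lo hi : lo <= hi -> Q lo -> ~ Q hi ->
  exists s, lo <= s < hi /\ Q s /\ ~ Q (S s).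
Proof.
  intros h. induction h as [|hi h IH]; intros hq hn; [contradiction|].
  destruct (classic (Q hi)) as [c|c].
  - exists hi. split; [lia|auto].
  - destruct (IH hq c) as [s [? ?]]. exists s. split; [lia|auto].
Qed.

Lemma nat_greatest (Q : nat -> Prop) n : Q 0 ->
  exists a, a <= n /\ Q a /\ forall a', a < a' -> a' <= n -> ~ Q a'.
Proof.
  intro h0. induction n as [|n IH].
  - exists 0. repeat split; auto. intros; lia.
  - destruct (classic (Q (S n))) as [c|c].
    + exists (S n). repeat split; auto. intros; lia.
    + destruct IH as [a [h1 [h2 h3]]]. exists a. repeat split; auto.
      intros a' h4 h5. destruct (Nat.eq_dec a' (S n)) as [->|ne]; auto. apply h3; lia.
Qed.

(** * Subgroups and composition series *)

Section GroupFacts.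
Variable G : group.
Local Notation "x * y" := (gmul G x y).
Local Notation "x ^-1" := (ginv G x) (at level 3).
Local Notation "1" := (gone G).

Lemma gmulrV x : x * x^-1 = 1.
Proof.
  rewrite <- (gmul1 G (x * x^-1)), <- (gmulV G (x^-1)) at 1.
  rewrite <- gmulA, (gmulA G (x^-1) x (x^-1)), gmulV, gmul1. apply gmulV.
Qed.

Lemma gmulr1 x : x * 1 = x.
Proof. rewrite <- (gmulV G x), gmulA, gmulrV. apply gmul1. Qed.

Lemma gmulKl x y : x^-1 * (x * y) = y.
Proof. rewrite gmulA, gmulV. apply gmul1. Qed.

Lemma gmulKVl x y : x * (x^-1 * y) = y.
Proof. rewrite gmulA, gmulrV. apply gmul1. Qed.

Lemma gmulKr x y : (x * y) * y^-1 = x.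
Proof. rewrite <- gmulA, gmulrV. apply gmulr1. Qed.

Lemma gmulKVr x y : (x * y^-1) * y = x.
Proof. rewrite <- gmulA, gmulV. apply gmulr1. Qed.

Lemma ginvK x : (x^-1)^-1 = x.
Proof. rewrite <- (gmulr1 ((x^-1)^-1)), <- (gmulV G x), gmulA, gmulV. apply gmul1. Qed.

Lemma ginvM x y : (x * y)^-1 = y^-1 * x^-1.
Proof.
  assert (h : (x * y) * (y^-1 * x^-1) = 1).
  { rewrite <- gmulA, (gmulA G y), gmulrV, gmul1. apply gmulrV. }
  rewrite <- (gmulr1 ((x * y)^-1)), <- h. apply gmulKl.
Qed.

Section Subgroup.
Variable A : G -> Prop.
Hypothesis hA : subgroup A.

Lemma subgroup1 : A 1. Proof. apply hA. Qed.
Lemma subgroupM x y : A x -> A y -> A (x * y). Proof. apply hA. Qed.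
Lemma subgroupV x : A x -> A x^-1. Proof. apply hA. Qed.

Lemma subgroupMr x y : A (x * y) -> A y -> A x.
Proof.
  intros hxy hy. rewrite <- (gmulKr x y). apply subgroupM; auto. apply subgroupV; auto.
Qed.

End Subgroup.

Definition inter (A B : G -> Prop) : G -> Prop := fun x => A x /\ B x.

Definition mulset (A B : G -> Prop) : G -> Prop :=
  fun x => exists a b, A a /\ B b /\ x = a * b.

Lemma inter_subgroup A B : subgroup A -> subgroup B -> subgroup (inter A B).
Proof.
  intros hA hB. split; [|split].
  - split; apply subgroup1; auto.
  - intros x y [? ?] [? ?]; split; apply subgroupM; auto.
  - intros x [? ?]; split; apply subgroupV; auto.
Qed.

Lemma normal_conjV A As a y : normal_in A As -> subgroup As -> As y -> A a ->
  A (y * a * y^-1).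
Proof.
  intros hn hAs hy ha. pose proof (hn a (y^-1) (subgroupV _ hAs _ hy) ha) as h.
  rewrite ginvK, gmulA in h. exact h.
Qed.

Lemma mulset_subgroup A As B : subgroup A -> subgroup As -> subgroup B ->
  subset B As -> normal_in A As -> subgroup (mulset A B).
Proof.
  intros hA hAs hB hBAs hn. split; [|split].
  - exists 1, 1. split; [apply subgroup1; auto|split; [apply subgroup1; auto|]].
    symmetry; apply gmul1.
  - intros x y [a [b [ha [hb ->]]]] [a' [b' [ha' [hb' ->]]]].
    exists (a * (b * a' * b^-1)), (b * b'). repeat split.
    + apply subgroupM; auto. apply (normal_conjV A As); auto.
    + apply subgroupM; auto.
    + rewrite <- !gmulA, gmulKl. reflexivity.
  - intros x [a [b [ha [hb ->]]]].
    exists (b^-1 * (a^-1 * b)), (b^-1). repeat split.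
    + apply (hn (a^-1) b (hBAs _ hb)). apply subgroupV; auto.
    + apply subgroupV; auto.
    + rewrite ginvM, <- !gmulA, gmulrV, gmulr1. reflexivity.
Qed.

(* Schreier's argument: if A <| As with As/A simple, the groups
   A (As :&: K j) along a normal series K form a normal series from A to As,
   hence each of them is A or As. *)
Section SimpleQuotientMeetsSeries.
Variables (A As : G -> Prop) (K : nat -> G -> Prop) (n : nat).
Hypotheses (hA : subgroup A) (hAs : subgroup As) (hAAs : subset A As)
  (hn : normal_in A As) (hsq : simple_quotient As A)
  (hK : forall j, j <= n -> subgroup (K j)) (hKn : forall x, K n x)
  (hKs : forall j, j < n -> subset (K j) (K (S j)) /\ normal_in (K j) (K (S j))).

Let Y j := mulset A (inter As (K j)).

Lemma mulset_meet_subgroup j : j <= n -> subgroup (Y j).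
Proof.
  intro hj. apply (mulset_subgroup A As); auto. apply inter_subgroup; auto.
  intros x [h _]; auto.
Qed.

Lemma mulset_meet_normal j : j < n -> normal_in (Y j) (Y (S j)).
Proof.
  intros hj x y [a [b [ha [[hbAs hbK] ->]]]] [h [c [hh [[hcAs hcK] ->]]]].
  set (h' := a^-1 * h * (c * a * c^-1)).
  assert (hh' : A h').
  { unfold h'. apply subgroupM; auto. apply subgroupM; auto. apply subgroupV; auto.
    apply (normal_conjV A As); auto. }
  exists (b^-1 * h' * b), (b^-1 * c * b). split; [|split; [split|]].
  - rewrite <- gmulA. apply hn; auto.
  - apply subgroupM; auto. apply subgroupM; auto. apply subgroupV; auto.
  - rewrite <- gmulA. apply (proj2 (hKs j hj)); auto.
  - unfold h'. rewrite !ginvM, <- !gmulA, !gmulKVl, gmulKl. reflexivity.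
Qed.

Lemma mulset_meet_dichotomy : forall j, j <= n -> same_set (Y j) A \/ same_set (Y j) As.
Proof.
  assert (A_Y : forall j, j <= n -> subset A (Y j)).
  { intros j hj x hx. exists x, 1. repeat split; auto.
    - apply subgroup1; auto.
    - apply subgroup1, hK; auto.
    - symmetry; apply gmulr1. }
  assert (Y_As : forall j, subset (Y j) As).
  { intros j x [a [b [ha [[hb _] ->]]]]. apply subgroupM; auto. }
  assert (from_top : forall d, d <= n -> same_set (Y (n - d)) A \/ same_set (Y (n - d)) As).
  2:{ intros j hj. replace j with (n - (n - j)) by lia. apply from_top; lia. }
  induction d as [|d IH]; intro hd.
  - right. rewrite Nat.sub_0_r. intro x; split; [apply Y_As|]. intro hx.
    exists 1, x. repeat split; auto. apply subgroup1; auto. symmetry; apply gmul1.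
  - destruct (IH ltac:(lia)) as [h | h]; replace (n - d) with (S (n - S d)) in h by lia.
    + left. intro x; split; [|apply A_Y; lia].
      intros [a [b [ha [[hb hbK] ->]]]]. apply h. exists a, b. repeat split; auto.
      apply (proj1 (hKs (n - S d) ltac:(lia))); auto.
    + apply (proj2 hsq); [apply mulset_meet_subgroup; lia | apply A_Y; lia | apply Y_As |].
      intros x y hy hx. apply mulset_meet_normal; [lia | apply h; exact hy | exact hx].
Qed.

End SimpleQuotientMeetsSeries.

End GroupFacts.

Lemma not_subset_witness (G : group) (A B : G -> Prop) :
  ~ subset A B -> exists x, A x /\ ~ B x.
Proof.
  intro h. apply NNPP. intro c. apply h. intros x hx. apply NNPP. intro d. apply c; eauto.
Qed.

Section CompositionSeries.
Variables (G : group) (n : nat) (L : nat -> G -> Prop).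
Hypothesis hL : composition_series n L.

Lemma cs_subgroup i : i <= n -> subgroup (L i).
Proof. apply hL. Qed.

Lemma cs_top x : L n x.
Proof. apply hL. Qed.

Lemma cs_bot x : L 0 x <-> x = gone G.
Proof. apply hL. Qed.

Lemma cs_step i : i < n ->
  subset (L i) (L (S i)) /\ normal_in (L i) (L (S i)) /\ simple_quotient (L (S i)) (L i).
Proof. apply hL. Qed.

Lemma cs_mono i i' : i <= i' -> i' <= n -> subset (L i) (L i').
Proof.
  intros hii' hi'. induction hii' as [|i' h IH]; intros x hx; auto.
  apply (proj1 (cs_step i' ltac:(lia))). apply IH; auto; lia.
Qed.

End CompositionSeries.

Lemma cs_meet_dichotomy (G : group) n (A B : nat -> G -> Prop) k j :
  composition_series n A -> composition_series n B -> k < n -> j <= n ->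
  same_set (mulset G (A k) (inter G (A (S k)) (B j))) (A k) \/
  same_set (mulset G (A k) (inter G (A (S k)) (B j))) (A (S k)).
Proof.
  intros hA hB hk hj. destruct (cs_step G n A hA k hk) as [s1 [s2 s3]].
  apply (mulset_meet_dichotomy G (A k) (A (S k)) B n); auto.
  - apply (cs_subgroup G n A hA); lia.
  - apply (cs_subgroup G n A hA); lia.
  - apply (cs_subgroup G n B hB).
  - apply (cs_top G n B hB).
  - intros j' hj'. destruct (cs_step G n B hB j' hj') as [t1 [t2 _]]; auto.
Qed.

Section TwoSeries.
Variables (G : group) (n : nat) (H K : nat -> G -> Prop).
Hypotheses (hH : composition_series n H) (hK : composition_series n K).

Definition HK i j := inter G (H i) (K j).

(* The H-labels of [HK i j] index the composition factors [H (S k) / H k]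
   that survive in [HK i j]. *)
Definition hlabel (A : G -> Prop) k := k < n /\ ~ subset (inter G A (H (S k))) (H k).

Lemma hlabel_mono A B k : subset A B -> hlabel A k -> hlabel B k.
Proof.
  intros hAB [hk hn]. split; auto. intro c. apply hn. intros x [h1 h2]. apply c. split; auto.
Qed.

Lemma HK_mono i j i' j' : i <= i' -> i' <= n -> j <= j' -> j' <= n ->
  subset (HK i j) (HK i' j').
Proof. intros h1 h2 h3 h4 x [a b]. split; [apply (cs_mono G n H hH i i') | apply (cs_mono G n K hK j j')]; auto. Qed.

Lemma hlabel_HK i j k : i <= n -> j <= n ->
  (hlabel (HK i j) k <-> k < i /\ ~ subset (HK (S k) j) (H k)).
Proof.
  intros hi hj. split.
  - intros [hk hs]. split.
    + destruct (Nat.lt_ge_cases k i) as [h|h]; auto. exfalso. apply hs.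
      intros x [[hx1 hx2] hx3]. apply (cs_mono G n H hH i k); auto; lia.
    + intro c. apply hs. intros x [[hx1 hx2] hx3]. apply c. split; auto.
  - intros [hk hs]. split; [lia|]. intro c. apply hs. intros x [hx1 hx2]. apply c.
    repeat split; auto. apply (cs_mono G n H hH (S k) i); auto.
Qed.

Lemma transfer_label k l : S k <= n -> S l <= n ->
  ~ subset (HK (S k) (S l)) (K l) -> subset (HK k (S l)) (K l) -> subset (HK (S k) l) (H k).
Proof.
  intros hk hl hnot hsub.
  destruct (not_subset_witness G _ _ hnot) as [x [[hxH hxK] hxn]].
  destruct (cs_meet_dichotomy G n H K k l hH hK ltac:(lia) ltac:(lia)) as [e|e].
  - intros y [hyH hyK]. apply e. exists (gone G), y. repeat split; auto.
    + apply subgroup1, (cs_subgroup G n H hH); lia.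
    + symmetry; apply gmul1.
  - exfalso. apply hxn. destruct (proj2 (e x) hxH) as [a [b [ha [[hbH hbK] ->]]]].
    assert (haK : K (S l) a).
    { apply (subgroupMr G _ (cs_subgroup G n K hK (S l) hl) a b); auto.
      apply (cs_mono G n K hK l (S l)); auto. }
    apply subgroupM; [apply (cs_subgroup G n K hK); lia | apply hsub; split |]; auto.
Qed.

Definition new_hlabel k l := ~ subset (HK (S k) (S l)) (H k) /\ subset (HK (S k) l) (H k).

(* As [K (S l) / K l] is simple, it creates at most one new H-label. *)
Lemma new_hlabel_unique k k' l : S k' <= n -> S k <= n -> S l <= n ->
  new_hlabel k l -> new_hlabel k' l -> k = k'.
Proof.
  assert (lt_absurd : forall k k', k < k' -> S k' <= n -> S l <= n ->
            new_hlabel k l -> new_hlabel k' l -> False).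
  { clear k k'. intros k k' hkk hk' hl [hx hs] [hy hs'].
    destruct (not_subset_witness G _ _ hx) as [x [[hxH hxK] hxn]].
    destruct (not_subset_witness G _ _ hy) as [y [[hyH hyK] hyn]].
    destruct (cs_meet_dichotomy G n K H l (S k) hK hH ltac:(lia) ltac:(lia)) as [e|e].
    - apply hxn, hs. split; auto. apply e. exists (gone G), x. repeat split; auto.
      + apply subgroup1, (cs_subgroup G n K hK); lia.
      + symmetry; apply gmul1.
    - apply hyn. destruct (proj2 (e y) hyK) as [a [b [ha [[hbK hbH] ->]]]].
      assert (hbk' : H k' b) by (apply (cs_mono G n H hH (S k) k'); auto; lia).
      assert (haH : H (S k') a).
      { apply (subgroupMr G _ (cs_subgroup G n H hH (S k') hk') a b); auto.
        apply (cs_mono G n H hH k' (S k')); auto. }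
      apply subgroupM; [apply (cs_subgroup G n H hH); lia | apply hs'; split |]; auto. }
  intros hk' hk hl h h'. destruct (Nat.lt_total k k') as [c|[c|c]]; auto; exfalso.
  - apply (lt_absurd k k'); auto.
  - apply (lt_absurd k' k); auto.
Qed.

Lemma HK_subset_H_of_hlabels i j i' j' : i <= n -> j <= n -> i' <= n -> j' <= n ->
  (forall k, hlabel (HK i j) k -> hlabel (HK i' j') k) -> subset (HK i j) (H i').
Proof.
  intros hi hj hi' hj' hlab.
  destruct (Nat.le_gt_cases i i') as [hii|hii].
  { intros x [hx _]. apply (cs_mono G n H hH i i'); auto. }
  apply NNPP. intro hnot.
  destruct (nat_crossing (fun s => ~ subset (HK i j) (H s)) i' i) as [s [hs [hs1 hs2]]];
    [lia | exact hnot | intro c; apply c; intros x [hx _]; exact hx |].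
  assert (hls : hlabel (HK i j) s).
  { split; [lia|]. intro c. apply hs1. intros x hx. apply c. split; auto.
    apply NNPP. intro d. apply hs2. intro e. apply d, e, hx. }
  apply hlab, (hlabel_HK i' j' s hi' hj') in hls. lia.
Qed.

Lemma HK_subset_K_of_hlabels i j i' j' : i <= n -> j <= n -> i' <= n -> j' <= n ->
  (forall k, hlabel (HK i j) k -> hlabel (HK i' j') k) -> subset (HK i j) (K j').
Proof.
  intros hi hj hi' hj' hlab.
  destruct (Nat.le_gt_cases j j') as [hjj|hjj].
  { intros x [_ hx]. apply (cs_mono G n K hK j j'); auto. }
  apply NNPP. intro hnot.
  destruct (nat_crossing (fun k => subset (HK k j) (K j')) 0 i) as [k [hk [hk1 hk2]]];
    [lia | | exact hnot |].
  { intros x [hx _]. apply (cs_bot G n H hH) in hx. subst x.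
    apply subgroup1, (cs_subgroup G n K hK); auto. }
  destruct (nat_crossing (fun l => subset (HK (S k) l) (K j')) j' j) as [l [hl [hl1 hl2]]];
    [lia | intros x [_ hx]; exact hx | exact hk2 |].
  assert (h_in_H : subset (HK (S k) l) (H k)).
  { apply transfer_label; try lia.
    - intro c. apply hl2. intros x hx. apply hl1. split; [apply hx | apply c, hx].
    - intros x hx. apply (cs_mono G n K hK j' l); try lia.
      apply hk1, (HK_mono k (S l) k j); auto; lia. }
  assert (hlk : hlabel (HK i j) k).
  { apply (hlabel_HK i j k); auto. split; [lia|]. intro c. apply hk2.
    intros x [hx1 hx2]. apply hk1. split; auto. apply c. split; auto. }
  apply hlab, (hlabel_HK i' j' k hi' hj') in hlk. destruct hlk as [_ hlk].
  apply hlk. intros x hx. apply h_in_H, (HK_mono (S k) j' (S k) l); auto; lia.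
Qed.

Lemma HK_subset_of_hlabels i j i' j' : i <= n -> j <= n -> i' <= n -> j' <= n ->
  (forall k, hlabel (HK i j) k -> hlabel (HK i' j') k) -> subset (HK i j) (HK i' j').
Proof.
  intros hi hj hi' hj' hlab x hx. split.
  - apply (HK_subset_H_of_hlabels i j i' j'); auto.
  - apply (HK_subset_K_of_hlabels i j i' j'); auto.
Qed.

Lemma hlabel_HK_stepH s j k : s < n -> j <= n ->
  hlabel (HK (S s) j) k -> hlabel (HK s j) k \/ k = s.
Proof.
  intros hs hj hk. apply (hlabel_HK (S s) j k) in hk; auto. destruct hk as [h1 h2].
  destruct (Nat.lt_ge_cases k s) as [h|h]; [left|right; lia].
  apply (hlabel_HK s j k); auto; lia.
Qed.

Lemma hlabel_HK_stepK i s : i <= n -> s < n ->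
  exists t, forall k, hlabel (HK i (S s)) k -> hlabel (HK i s) k \/ k = t.
Proof.
  intros hi hs.
  assert (new : forall k, hlabel (HK i (S s)) k -> ~ hlabel (HK i s) k -> new_hlabel k s).
  { intros k hk hnk. apply (hlabel_HK i (S s) k) in hk; auto. destruct hk as [hk1 hk2].
    split; auto. apply NNPP. intro c. apply hnk, (hlabel_HK i s k); auto; lia. }
  destruct (classic (exists t, hlabel (HK i (S s)) t /\ ~ hlabel (HK i s) t)) as [[t [ht1 ht2]]|h].
  - exists t. intros k hk. destruct (classic (hlabel (HK i s) k)) as [c|c]; [left; auto|right].
    assert (bound : forall m, hlabel (HK i (S s)) m -> S m <= n) by (intros m [hm _]; lia).
    apply (new_hlabel_unique k t s); auto.
  - exists 0. intros k hk. left. apply NNPP. intro c. apply h. eauto.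
Qed.

End TwoSeries.

(** * Finite posets *)

Definition meet_irreducible {T : Type} (le : T -> T -> Prop) : T -> Prop :=
  join_irreducible (fun x y => le y x).

Lemma partial_order_flip (T : Type) (le : T -> T -> Prop) :
  partial_order le -> partial_order (fun x y => le y x).
Proof. intros [h1 [h2 h3]]. split; [|split]; eauto. Qed.

Section FinitePoset.
Variables (T : Type) (le : T -> T -> Prop).
Hypotheses (po : partial_order le) (fin : finite_type T).

Lemma po_refl x : le x x. Proof. apply po. Qed.
Lemma po_anti x y : le x y -> le y x -> x = y. Proof. apply po. Qed.
Lemma po_trans x y z : le x y -> le y z -> le x z. Proof. apply po. Qed.

Lemma minimal_below (P : T -> Prop) x : P x ->
  exists m, P m /\ le m x /\ forall z, P z -> le z m -> z = m.
Proof.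
  destruct fin as [l hl].
  assert (in_list : forall l x, P x -> exists m, P m /\ le m x /\
             forall z, In z l -> P z -> le z m -> z = m).
  { clear x l hl. induction l as [|a l IH]; intros x hx.
    - exists x. repeat split; auto using po_refl. intros z [].
    - destruct (IH x hx) as [m [hm1 [hm2 hm3]]].
      destruct (classic (P a /\ le a m /\ a <> m)) as [[ha1 [ha2 ha3]]|ha].
      + destruct (IH a ha1) as [m' [h1 [h2 h3]]]. exists m'. repeat split; auto.
        { apply (po_trans _ a); auto. apply (po_trans _ m); auto. }
        intros z [<-|hz] hpz hzm; auto using po_anti.
      + exists m. repeat split; auto. intros z [<-|hz] hpz hzm; auto.
        apply NNPP. intro c. apply ha. auto. }
  intro hx. destruct (in_list l x hx) as [m [h1 [h2 h3]]]. exists m. auto.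
Qed.

Lemma join_irreducible_below y x : ~ le y x ->
  exists j, join_irreducible le j /\ le j y /\ ~ le j x.
Proof.
  intro h.
  destruct (minimal_below (fun w => le w y /\ ~ le w x) y (conj (po_refl y) h))
    as [m [[hmy hmx] [_ hmin]]].
  exists m. split; auto. intros a b [ha [hb hab]].
  apply NNPP. intro c. apply hmx, hab.
  - apply NNPP. intro d. apply c. left. symmetry. apply hmin; auto.
    split; [apply (po_trans _ m)|]; auto.
  - apply NNPP. intro d. apply c. right. symmetry. apply hmin; auto.
    split; [apply (po_trans _ m)|]; auto.
Qed.

Definition count_in (l : list T) (P : T -> Prop) : nat :=
  length (filter (fun z => if excluded_middle_informative (P z) then true else false) l).

Lemma count_in_le l P Q : (forall z, P z -> Q z) -> count_in l P <= count_in l Q.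
Proof.
  intro h. unfold count_in. induction l as [|a l IH]; simpl; auto.
  destruct (excluded_middle_informative (P a)); destruct (excluded_middle_informative (Q a));
    simpl; try lia. exfalso; auto.
Qed.

Lemma count_in_lt l P Q t : (forall z, P z -> Q z) -> In t l -> Q t -> ~ P t ->
  count_in l P < count_in l Q.
Proof.
  intros h hin hq hp. unfold count_in. induction l as [|a l IH]; simpl in *; [contradiction|].
  destruct hin as [->|hin].
  - destruct (excluded_middle_informative (P t)); [contradiction|].
    destruct (excluded_middle_informative (Q t)); [|contradiction]. simpl.
    pose proof (count_in_le l P Q h). unfold count_in in H. lia.
  - destruct (excluded_middle_informative (P a)); destruct (excluded_middle_informative (Q a));
      simpl; try (specialize (IH hin); lia). exfalso; auto.
Qed.

Lemma count_in_False l : count_in l (fun _ => False) = 0.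
Proof.
  unfold count_in. induction l as [|a l IH]; simpl; auto.
  destruct (excluded_middle_informative False); [contradiction | exact IH].
Qed.

End FinitePoset.

Lemma maximal_above (T : Type) (le : T -> T -> Prop) : partial_order le -> finite_type T ->
  forall (P : T -> Prop) x, P x -> exists m, P m /\ le x m /\ forall z, P z -> le m z -> z = m.
Proof.
  intros po fin. exact (minimal_below T (fun a b => le b a) (partial_order_flip T le po) fin).
Qed.

Lemma meet_irreducible_above (T : Type) (le : T -> T -> Prop) :
  partial_order le -> finite_type T ->
  forall y x, ~ le y x -> exists m, meet_irreducible le m /\ le x m /\ ~ le y m.
Proof.
  intros po fin y x h.
  exact (join_irreducible_below T (fun a b => le b a) (partial_order_flip T le po) fin x y h).
Qed.

Lemma meets_from_joins (T : Type) (le : T -> T -> Prop) : partial_order le -> finite_type T ->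
  (forall x y, exists j, is_join le x y j) -> forall bot, (forall x, le bot x) ->
  forall x y, exists m, is_meet le x y m.
Proof.
  intros po fin joins bot hbot x y.
  destruct (maximal_above T le po fin (fun u => le u x /\ le u y) bot (conj (hbot x) (hbot y)))
    as [m [[hmx hmy] [_ hmax]]].
  exists m. repeat split; auto. intros u hux huy.
  destruct (joins u m) as [w [hw1 [hw2 hw3]]].
  assert (wm : w = m) by (apply hmax; auto; split; apply hw3; auto).
  subst w; auto.
Qed.

Lemma semimodular_of_labels (T : Type) (le : T -> T -> Prop) (lab : T -> nat -> Prop) :
  partial_order le ->
  (forall x y, le x y <-> forall k, lab y k -> lab x k) ->
  (forall a b j, is_join le a b j -> forall k, lab j k <-> lab a k /\ lab b k) ->
  (forall a b, covers le a b -> exists t, ~ lab b t /\ forall k, lab a k <-> lab b k \/ k = t) ->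
  semimodular le.
Proof.
  intros po hle hjoin hcov a b c ac bc hab hac hbc.
  assert (ext : forall x y, (forall k, lab x k <-> lab y k) -> x = y).
  { intros x y h. apply (po_anti T le po); apply hle; intros k; apply h. }
  destruct (hcov a b hab) as [t [hbt ht]].
  pose proof (hjoin _ _ _ hac) as eac. pose proof (hjoin _ _ _ hbc) as ebc.
  destruct (classic (lab c t)) as [hc|hc].
  - right. split; [split|].
    + apply hle. intros k hk. apply eac. apply ebc in hk. destruct hk as [h1 h2].
      split; auto. apply ht; auto.
    + intro e. assert (h1 : lab ac t) by (apply eac; split; auto; apply ht; auto).
      rewrite e in h1. apply ebc in h1. tauto.
    + intros z h1 h2. rewrite hle in h1, h2. destruct (classic (lab z t)) as [hz|hz].
      * left. apply ext. intro k. split; auto.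
        intro hk. apply eac in hk. destruct hk as [hk1 hk2]. apply ht in hk1.
        destruct hk1 as [hk1| ->]; auto. apply h2, ebc; auto.
      * right. apply ext. intro k. split; auto.
        intro hk. apply ebc. pose proof (h1 k hk) as q. apply eac in q.
        destruct q as [q1 q2]. apply ht in q1. destruct q1 as [q1| ->]; auto. contradiction.
  - left. apply ext. intro k. rewrite eac, ebc, ht. split.
    + intros [[h| ->] h2]; [auto | contradiction].
    + intros [h1 h2]; auto.
Qed.

Section TwoChains.
Variables (T : Type) (le : T -> T -> Prop).
Hypotheses (po : partial_order le) (fin : finite_type T).

Definition chain (C : T -> Prop) := forall s t, C s -> C t -> le s t \/ le t s.

Definition width_le2 (P : T -> Prop) := ~ exists a b c, P a /\ P b /\ P c /\
  incomparable le a b /\ incomparable le a c /\ incomparable le b c.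

Definition two_chain_cover (P C D : T -> Prop) := chain C /\ chain D /\
  (forall z, C z -> P z) /\ (forall z, D z -> P z) /\ (forall z, P z -> C z \/ D z).

Definition has_incomparable (P : T -> Prop) z := exists w, P w /\ incomparable le z w.

Lemma incomparable_sym x y : incomparable le x y -> incomparable le y x.
Proof. intros [h1 h2]; split; auto. Qed.

Lemma two_chain_cover_tops P C D : two_chain_cover P C D ->
  (exists a b, P a /\ P b /\ incomparable le a b) ->
  exists x1 x2, C x1 /\ D x2 /\ incomparable le x1 x2 /\
    (forall z, C z -> has_incomparable P z -> le z x1) /\
    (forall z, D z -> has_incomparable P z -> le z x2).
Proof.
  intros [hC [hD [hCP [hDP hcov]]]] [a [b [ha [hb hab]]]].
  assert (ex : exists c0 d0, C c0 /\ has_incomparable P c0 /\ D d0 /\ has_incomparable P d0).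
  { destruct hab as [p q].
    destruct (hcov a ha) as [ca|da]; destruct (hcov b hb) as [cb|db].
    - exfalso. destruct (hC a b ca cb); auto.
    - exists a, b. repeat split; auto; [exists b | exists a]; repeat split; auto.
    - exists b, a. repeat split; auto; [exists a | exists b]; repeat split; auto.
    - exfalso. destruct (hD a b da db); auto. }
  destruct ex as [c0 [d0 [hc0 [hac0 [hd0 had0]]]]].
  assert (top_of : forall E e0, chain E -> E e0 -> has_incomparable P e0 ->
            exists x, E x /\ has_incomparable P x /\
                      forall z, E z -> has_incomparable P z -> le z x).
  { intros E e0 hE he0 hae0.
    destruct (maximal_above T le po fin (fun z => E z /\ has_incomparable P z) e0 (conj he0 hae0))
      as [x [[hxE hxA] [_ hxm]]].
    exists x. repeat split; auto. intros z hz hza.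
    destruct (hE z x hz hxE) as [?|h]; auto.
    rewrite (hxm z (conj hz hza) h). apply (po_refl T le po). }
  destruct (top_of C c0 hC hc0 hac0) as [x1 [hx1C [[w1 [hw1 i1]] gx1]]].
  destruct (top_of D d0 hD hd0 had0) as [x2 [hx2D [[w2 [hw2 i2]] gx2]]].
  assert (w1D : D w1).
  { destruct (hcov w1 hw1) as [c|c]; auto. exfalso. destruct i1 as [p q].
    destruct (hC x1 w1 hx1C c); auto. }
  assert (w2C : C w2).
  { destruct (hcov w2 hw2) as [c|c]; auto. exfalso. destruct i2 as [p q].
    destruct (hD x2 w2 hx2D c); auto. }
  assert (l1 : le w1 x2).
  { apply gx2; auto. exists x1. split; [apply hCP; auto | apply incomparable_sym; auto]. }
  assert (l2 : le w2 x1).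
  { apply gx1; auto. exists x2. split; [apply hDP; auto | apply incomparable_sym; auto]. }
  exists x1, x2. repeat split; auto; intro c.
  - apply (proj2 i2), (po_trans T le po _ x1); auto.
  - apply (proj2 i1), (po_trans T le po _ x2); auto.
Qed.

(* Cut the chain [C1] at [x1] and hang [t] on top of it; what is left of
   [C1] lies in a chain with [D1]. *)
Lemma two_chain_cover_cut (P : T -> Prop) t C1 D1 x1 : P t ->
  two_chain_cover (fun z => P z /\ z <> t) C1 D1 ->
  (forall z, C1 z -> has_incomparable (fun z => P z /\ z <> t) z -> le z x1) ->
  le x1 t -> exists C D, two_chain_cover P C D.
Proof.
  intros hPt [hC1 [hD1 [hC1P [hD1P hcov]]]] hx1 hx1t.
  set (C := fun z => (C1 z /\ le z x1) \/ z = t).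
  exists C, (fun z => P z /\ ~ C z). split; [|split; [|split; [|split]]].
  - intros a b [[ha1 ha2]| ->] [[hb1 hb2]| ->];
      [apply hC1; auto | left | right | left; apply (po_refl T le po)];
      apply (po_trans T le po _ x1); auto.
  - intros a b [ha1 ha2] [hb1 hb2]. apply NNPP. intro c.
    assert (ha : a <> t) by (intro e; apply ha2; right; auto).
    assert (hb : b <> t) by (intro e; apply hb2; right; auto).
    assert (inc : incomparable le a b) by (split; intro d; apply c; auto).
    destruct (hcov a (conj ha1 ha)) as [ca|da].
    + apply ha2. left. split; auto. apply hx1; auto. exists b. auto.
    + destruct (hcov b (conj hb1 hb)) as [cb|db].
      * apply hb2. left. split; auto. apply hx1; auto. exists a.
        split; auto using incomparable_sym.
      * apply c, hD1; auto.
  - intros z [[h _]| ->]; auto. apply hC1P; auto.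
  - intros z [h _]; auto.
  - intros z hz. destruct (classic (C z)); auto.
Qed.

Lemma two_chain_cover_add_max (P : T -> Prop) t C1 D1 : width_le2 P -> P t ->
  (forall z, P z -> le t z -> z = t) ->
  two_chain_cover (fun z => P z /\ z <> t) C1 D1 -> exists C D, two_chain_cover P C D.
Proof.
  intros h3 hPt htmax hcov1.
  set (P' := fun z => P z /\ z <> t) in *.
  destruct (classic (exists a b, P' a /\ P' b /\ incomparable le a b)) as [hinc|hno].
  - destruct (two_chain_cover_tops P' C1 D1 hcov1 hinc)
      as [x1 [x2 [hx1 [hx2 [i12 [gx1 gx2]]]]]].
    pose proof hcov1 as [hC1 [hD1 [hC1P [hD1P hcov]]]].
    destruct (hC1P x1 hx1) as [P1 n1]. destruct (hD1P x2 hx2) as [P2 n2].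
    destruct (classic (le x1 t \/ le x2 t)) as [[c1|c2]|c].
    + apply (two_chain_cover_cut P t C1 D1 x1); auto.
    + apply (two_chain_cover_cut P t D1 C1 x2); auto.
      split; [|split; [|split; [|split]]]; auto. intros z hz. destruct (hcov z hz); auto.
    + exfalso. apply h3. destruct i12 as [i1 i2].
      exists t, x1, x2. repeat split; auto; intro d;
        solve [apply n1, htmax; auto | apply n2, htmax; auto | auto].
  - exists P', (fun z => z = t). split; [|split; [|split; [|split]]].
    + intros u w hu hw. apply NNPP. intro c. apply hno. exists u, w.
      split; [|split]; auto. split; intro d; apply c; auto.
    + intros u w -> ->. left; apply (po_refl T le po).
    + intros z [h _]; auto.
    + intros z ->; auto.
    + intros z hz. destruct (classic (z = t)); [right | left; split]; auto.
Qed.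

Lemma two_chain_cover_exists (P : T -> Prop) : width_le2 P -> exists C D, two_chain_cover P C D.
Proof.
  destruct fin as [l hl].
  assert (by_size : forall N P, count_in T l P <= N -> width_le2 P ->
            exists C D, two_chain_cover P C D).
  2:{ intro h. apply (by_size (count_in T l P)); auto. }
  clear P. induction N as [|N IH]; intros P hN h3;
    (destruct (classic (exists x, P x)) as [[x hx]|hne];
     [| exists (fun _ => False), (fun _ => False);
        repeat split; try (intros ? ? []); try (intros ? []);
        intros z hz; exfalso; eauto]).
  - exfalso. pose proof (count_in_lt T l (fun _ => False) P x) as c.
    rewrite count_in_False in c. assert (0 < count_in T l P) by (apply c; [intros ? [] | auto..]). lia.
  - destruct (maximal_above T le po fin P x hx) as [t [hPt [_ htmax]]].
    destruct (IH (fun z => P z /\ z <> t)) as [C1 [D1 hcov1]].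
    + assert (count_in T l (fun z => P z /\ z <> t) < count_in T l P); [|lia].
      apply (count_in_lt T l _ _ t); auto; [intros z [h _]; auto | intros [_ c]; auto].
    + intros [a [b [c [[ha _] [[hb _] [[hc _] r]]]]]]. apply h3. exists a, b, c. auto.
    + apply (two_chain_cover_add_max P t C1 D1); auto.
Qed.

End TwoChains.

Arguments chain {T} le C.
Arguments width_le2 {T} le P.
Arguments two_chain_cover {T} le P C D.

Section CoverPaths.
Variables (T : Type) (le : T -> T -> Prop).
Hypotheses (po : partial_order le) (fin : finite_type T).
Variable top : T.
Hypothesis htop : forall x, le x top.

Definition cover_path (k : nat) (u : nat -> T) := forall a, a < k -> covers le (u a) (u (S a)).

Lemma cover_below_chain (C : T -> Prop) x : chain le C -> x <> top ->
  (forall s, C s -> le x s) -> exists y, covers le x y /\ forall s, C s -> s <> x -> le y s.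
Proof.
  intros hch nxt hC.
  set (C' := fun z => (C z /\ z <> x) \/ z = top).
  assert (C'ch : chain le C') by (intros p q [[hp _]| ->] [[hq _]| ->]; auto).
  destruct (minimal_below T le po fin C' top (or_intror eq_refl)) as [s0 [hs0 [_ hs0m]]].
  assert (xs0 : le x s0 /\ s0 <> x) by (destruct hs0 as [[h1 h2]| ->]; auto).
  destruct (minimal_below T le po fin (fun z => le x z /\ z <> x /\ le z s0) s0
              (conj (proj1 xs0) (conj (proj2 xs0) (po_refl T le po s0))))
    as [y [[hy1 [hy2 hy3]] [_ hym]]].
  exists y. split.
  - split; [split; auto|]. intros z h1 h2. destruct (classic (z = x)) as [e|e]; [left; auto|right].
    apply hym; auto. repeat split; auto. apply (po_trans T le po _ y); auto.
  - intros s hs hsx. assert (hs' : C' s) by (left; auto).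
    apply (po_trans T le po _ s0); auto.
    destruct (C'ch s s0 hs' hs0) as [c|c]; [rewrite (hs0m s hs' c)|]; auto. apply (po_refl T le po).
Qed.

Lemma cover_path_through (C : T -> Prop) x : chain le C -> (forall s, C s -> le x s) ->
  exists k u, u 0 = x /\ u k = top /\ cover_path k u /\
    forall s, C s -> exists a, a <= k /\ u a = s.
Proof.
  destruct fin as [l hl].
  assert (by_size : forall N x C, count_in T l (le x) <= N -> chain le C ->
            (forall s, C s -> le x s) ->
            exists k u, u 0 = x /\ u k = top /\ cover_path k u /\
              forall s, C s -> exists a, a <= k /\ u a = s).
  2:{ intros hC hx. apply (by_size (count_in T l (le x))); auto. }
  clear C x. induction N as [|N IH]; intros x C hN hch hC.
  - exfalso. pose proof (count_in_lt T l (fun _ => False) (le x) x) as c.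
    rewrite count_in_False in c.
    assert (0 < count_in T l (le x)) by (apply c; [intros ? [] | auto | apply (po_refl T le po) | auto]).
    lia.
  - destruct (classic (x = top)) as [->|nxt].
    { exists 0, (fun _ => top). split; [auto | split; [auto | split]].
      - intros a ha; lia.
      - intros s hs. exists 0. split; auto. apply (po_anti T le po); auto. }
    destruct (cover_below_chain C x hch nxt hC) as [y [[[hxy hne] hcov] hyC]].
    destruct (IH y (fun z => C z /\ z <> x)) as [k [u [u0 [uk [ucov uC]]]]].
    + assert (count_in T l (le y) < count_in T l (le x)); [|lia].
      apply (count_in_lt T l _ _ x); auto; [| apply (po_refl T le po) |].
      * intros z hz. apply (po_trans T le po _ y); auto.
      * intro c. apply hne, (po_anti T le po); auto.
    + intros a b [ha _] [hb _]. apply hch; auto.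
    + intros s [hs hsx]. auto.
    + exists (S k), (fun a => match a with 0 => x | S a' => u a' end).
      split; [auto | split; [auto | split]].
      * intros [|a] ha; [rewrite u0; repeat split; auto | apply ucov; lia].
      * intros s hs. destruct (classic (s = x)) as [e|e]; [exists 0; split; auto; lia|].
        destruct (uC s (conj hs e)) as [a [ha1 ha2]]. exists (S a). split; [lia|auto].
Qed.

End CoverPaths.

Arguments cover_path {T} le k u.


(** * The lattice CSL(H, K) *)

Section CSLLattice.
Variables (G : group) (n : nat) (H K : nat -> G -> Prop).
Hypotheses (hH : composition_series n H) (hK : composition_series n K).

Local Notation CSL := (CSL n H K).
Local Notation lec := (@CSL_dual_le G n H K).
Local Notation HK := (HK G H K).
Local Notation hlabel := (hlabel G n H).

(* Indices are truncated at [n], so that [csl_mk] is total. *)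
Definition csl_mk (i j : nat) : CSL :=
  exist _ (fun x => H (min i n) x /\ K (min j n) x)
    (ex_intro _ (min i n) (ex_intro _ (min j n)
      (conj (Nat.le_min_r i n) (conj (Nat.le_min_r j n) eq_refl)))).

Lemma csl_eq (A B : CSL) : (forall x, proj1_sig A x <-> proj1_sig B x) -> A = B.
Proof.
  destruct A as [a pa], B as [b pb]; simpl. intro h.
  assert (a = b) by (apply functional_extensionality; intro x; apply propositional_extensionality; auto).
  subst b. f_equal. apply proof_irrelevance.
Qed.

Lemma csl_mk_val i j x : i <= n -> j <= n -> proj1_sig (csl_mk i j) x <-> HK i j x.
Proof. intros hi hj. simpl. rewrite !Nat.min_l by lia. reflexivity. Qed.

Lemma csl_rep (A : CSL) : exists i j, i <= n /\ j <= n /\ A = csl_mk i j.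
Proof.
  destruct A as [a [i [j [hi [hj ->]]]]]. exists i, j. repeat split; auto.
  apply csl_eq. intro x. rewrite csl_mk_val by auto. reflexivity.
Qed.

Lemma le_csl_mk i j i' j' : i <= n -> j <= n -> i' <= n -> j' <= n ->
  (lec (csl_mk i j) (csl_mk i' j') <-> subset (HK i' j') (HK i j)).
Proof.
  intros. unfold CSL_dual_le. split; intros h x hx.
  - apply (csl_mk_val i j); auto. apply h, (csl_mk_val i' j'); auto.
  - apply (csl_mk_val i j); auto. apply h, (csl_mk_val i' j'); auto.
Qed.

Lemma csl_partial_order : partial_order lec.
Proof.
  split; [|split].
  - intros x y h; auto.
  - intros x y h1 h2. apply csl_eq. intro z; split; auto.
  - intros x y z h1 h2 w hw. auto.
Qed.

Lemma csl_finite : finite_type CSL.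
Proof.
  exists (flat_map (fun i => map (fun j => csl_mk i j) (seq 0 (S n))) (seq 0 (S n))).
  intro A. destruct (csl_rep A) as [i [j [hi [hj ->]]]].
  apply in_flat_map. exists i. split; [apply in_seq; lia|].
  apply in_map_iff. exists j. split; auto. apply in_seq; lia.
Qed.

Lemma csl_join i j i' j' : i <= n -> j <= n -> i' <= n -> j' <= n ->
  is_join lec (csl_mk i j) (csl_mk i' j') (csl_mk (min i i') (min j j')).
Proof.
  intros hi hj hi' hj'. split; [|split].
  - apply le_csl_mk; try lia. apply (HK_mono G n H K hH hK); lia.
  - apply le_csl_mk; try lia. apply (HK_mono G n H K hH hK); lia.
  - intros u h1 h2. destruct (csl_rep u) as [a [b [ha [hb ->]]]].
    apply (le_csl_mk i j a b hi hj ha hb) in h1.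
    apply (le_csl_mk i' j' a b hi' hj' ha hb) in h2.
    apply le_csl_mk; try lia.
    intros x hx. destruct (h1 x hx) as [x1 x2]. destruct (h2 x hx) as [y1 y2]. split.
    + destruct (Nat.min_spec i i') as [[_ ->]|[_ ->]]; auto.
    + destruct (Nat.min_spec j j') as [[_ ->]|[_ ->]]; auto.
Qed.

Lemma csl_joins x y : exists j, is_join lec x y j.
Proof.
  destruct (csl_rep x) as [i [j [hi [hj ->]]]], (csl_rep y) as [i' [j' [hi' [hj' ->]]]].
  eexists. apply csl_join; auto.
Qed.

Lemma csl_finite_lattice : finite_lattice lec.
Proof.
  assert (bot : forall x, lec (csl_mk n n) x).
  { intro x. destruct (csl_rep x) as [i [j [hi [hj ->]]]]. apply le_csl_mk; auto.
    intros y _. split; [apply (cs_top G n H hH) | apply (cs_top G n K hK)]. }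
  split; [exact csl_partial_order | split; [exact csl_finite |]].
  split; [exact (inhabits (csl_mk 0 0)) | split; [exact csl_joins |]].
  exact (meets_from_joins _ lec csl_partial_order csl_finite csl_joins _ bot).
Qed.

(* [csl_mk i j] is the join of [csl_mk i n] and [csl_mk n j], and each of
   these two families is a chain. *)
Lemma csl_slim : slim lec.
Proof.
  assert (hJ : forall x, join_irreducible lec x ->
                 exists a, a <= n /\ (x = csl_mk a n \/ x = csl_mk n a)).
  { intros x hx. destruct (csl_rep x) as [i [j [hi [hj ->]]]].
    pose proof (csl_join i n n j hi ltac:(lia) ltac:(lia) hj) as hjn.
    rewrite Nat.min_l in hjn by lia. rewrite Nat.min_r in hjn by lia.
    destruct (hx _ _ hjn) as [e|e]; [exists i | exists j]; auto. }
  assert (comp : forall a b, a <= n -> b <= n ->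
     (lec (csl_mk a n) (csl_mk b n) \/ lec (csl_mk b n) (csl_mk a n)) /\
     (lec (csl_mk n a) (csl_mk n b) \/ lec (csl_mk n b) (csl_mk n a))).
  { intros a b ha hb. split; destruct (Nat.le_ge_cases a b); [right|left|right|left];
      apply le_csl_mk; auto; apply (HK_mono G n H K hH hK); lia. }
  intros [a [b [c [ja [jb [jc [iab [iac ibc]]]]]]]].
  destruct (hJ a ja) as [x [hx [ea|ea]]]; destruct (hJ b jb) as [y [hy [eb|eb]]];
  destruct (hJ c jc) as [z [hz [ec|ec]]]; subst a b c;
  unfold incomparable in *;
  try (destruct (comp x y hx hy) as [[?|?] [?|?]]; tauto);
  try (destruct (comp x z hx hz) as [[?|?] [?|?]]; tauto);
  try (destruct (comp y z hy hz) as [[?|?] [?|?]]; tauto).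
Qed.

Definition csl_hlabel (A : CSL) k := hlabel (proj1_sig A) k.

Lemma csl_hlabel_mk i j k : i <= n -> j <= n ->
  (csl_hlabel (csl_mk i j) k <-> hlabel (HK i j) k).
Proof.
  intros hi hj. unfold csl_hlabel.
  split; apply hlabel_mono; intros x hx; apply (csl_mk_val i j); auto.
Qed.

Lemma le_csl_hlabel (A B : CSL) : lec A B <-> (forall k, csl_hlabel B k -> csl_hlabel A k).
Proof.
  split; [intros h k; apply hlabel_mono, h|].
  destruct (csl_rep A) as [i [j [hi [hj ->]]]], (csl_rep B) as [i' [j' [hi' [hj' ->]]]].
  intro h. apply le_csl_mk; auto. apply (HK_subset_of_hlabels G n H K hH hK); auto.
  intro k. rewrite <- !csl_hlabel_mk by auto. apply h.
Qed.

Lemma csl_hlabel_join (A B J : CSL) : is_join lec A B J ->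
  forall k, csl_hlabel J k <-> csl_hlabel A k /\ csl_hlabel B k.
Proof.
  intros hJ k.
  destruct (csl_rep A) as [i [j [hi [hj ->]]]], (csl_rep B) as [i' [j' [hi' [hj' ->]]]].
  assert (e : J = csl_mk (min i i') (min j j')).
  { destruct hJ as [h1 [h2 h3]]. destruct (csl_join i j i' j' hi hj hi' hj') as [g1 [g2 g3]].
    apply (po_anti _ lec csl_partial_order); auto. }
  subst J. rewrite !csl_hlabel_mk, !(hlabel_HK G n H K hH) by lia.
  split.
  - intros [h1 h2]. split; split; try lia; intro c; apply h2; intros x hx; apply c.
    + apply (HK_mono G n H K hH hK (S k) (min j j') (S k) j); try lia; exact hx.
    + apply (HK_mono G n H K hH hK (S k) (min j j') (S k) j'); try lia; exact hx.
  - intros [[h1 h2] [h1' h2']]. split; [lia|].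
    destruct (Nat.min_spec j j') as [[_ ->]|[_ ->]]; auto.
Qed.

Lemma csl_cover_one_hlabel i j i0 j0 : i <= n -> j <= n -> i0 <= i -> j0 <= j ->
  covers lec (csl_mk i j) (csl_mk i0 j0) ->
  exists t, forall k, hlabel (HK i j) k -> hlabel (HK i0 j0) k \/ k = t.
Proof.
  intros hi hj hi0 hj0 [[_ hne] hcov].
  assert (box : forall p q, i0 <= p <= i -> j0 <= q <= j ->
                  csl_mk p q <> csl_mk i j -> csl_mk p q = csl_mk i0 j0).
  { intros p q hp hq hpq.
    destruct (hcov (csl_mk p q)) as [e|e]; try congruence;
      apply le_csl_mk; try lia; apply (HK_mono G n H K hH hK); lia. }
  assert (same : forall p q p' q', p <= n -> q <= n -> p' <= n -> q' <= n ->
                   csl_mk p q = csl_mk p' q' -> forall k, hlabel (HK p q) k <-> hlabel (HK p' q') k).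
  { intros p q p' q' hp hq hp' hq' e k. rewrite <- !csl_hlabel_mk, e by auto. reflexivity. }
  destruct (classic (csl_mk i0 j = csl_mk i j)) as [c|c].
  - destruct (nat_crossing (fun s => csl_mk i0 s <> csl_mk i j) j0 j) as [s [hs [q1 q2]]];
      [lia | congruence | tauto |].
    apply NNPP in q2. apply box in q1; try lia.
    destruct (hlabel_HK_stepK G n H K hH hK i0 s ltac:(lia) ltac:(lia)) as [t ht].
    exists t. intros k hk. rewrite <- (same i0 s i0 j0), (same i j i0 (S s)) in *; auto; lia.
  - apply box in c; try lia.
    destruct (nat_crossing (fun s => csl_mk s j <> csl_mk i j) i0 i) as [s [hs [q1 q2]]];
      [lia | congruence | tauto |].
    apply NNPP in q2. apply box in q1; try lia.
    exists s. intros k hk. rewrite <- (same s j i0 j0) by (auto; lia).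
    apply (hlabel_HK_stepH G n H K hH s j k); try lia. rewrite (same (S s) j i j); auto; lia.
Qed.

Lemma csl_hlabel_cover (A B : CSL) : covers lec A B ->
  exists t, ~ csl_hlabel B t /\ forall k, csl_hlabel A k <-> csl_hlabel B k \/ k = t.
Proof.
  intro hcov. pose proof hcov as [[hle hne] _].
  assert (extra : exists t, forall k, csl_hlabel A k -> csl_hlabel B k \/ k = t).
  { destruct (csl_rep A) as [i [j [hi [hj ->]]]], (csl_rep B) as [i' [j' [hi' [hj' ->]]]].
    assert (eB : csl_mk i' j' = csl_mk (min i i') (min j j')).
    { destruct (csl_join i j i' j' hi hj hi' hj') as [g1 [g2 g3]].
      apply (po_anti _ lec csl_partial_order); auto. apply g3; auto.
      apply (po_refl _ lec csl_partial_order). }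
    rewrite eB in hcov |- *.
    destruct (csl_cover_one_hlabel i j (min i i') (min j j')) as [t ht]; auto; try lia.
    exists t. intro k. rewrite !csl_hlabel_mk by lia. apply ht. }
  destruct extra as [t ht].
  assert (hBA : forall k, csl_hlabel B k -> csl_hlabel A k) by (apply le_csl_hlabel; auto).
  assert (hBt : ~ csl_hlabel B t).
  { intro c. apply hne, (po_anti _ lec csl_partial_order); auto. apply le_csl_hlabel.
    intros k hk. destruct (ht k hk) as [?| ->]; auto. }
  exists t. split; auto. intro k. split; auto. intros [h| ->]; auto.
  apply NNPP. intro c. apply hne, (po_anti _ lec csl_partial_order); auto. apply le_csl_hlabel.
  intros k hk. destruct (ht k hk) as [?| ->]; tauto.
Qed.

Lemma csl_slim_semimodular : slim_semimodular_lattice lec.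
Proof.
  split; [exact csl_finite_lattice | split; [exact csl_slim |]].
  apply (semimodular_of_labels _ lec csl_hlabel csl_partial_order le_csl_hlabel
           csl_hlabel_join csl_hlabel_cover).
Qed.

End CSLLattice.

(** * Slim semimodular lattices *)

Lemma finite_lattice_top (T : Type) (le : T -> T -> Prop) :
  finite_lattice le -> exists t, forall x, le x t.
Proof.
  intros [po [fin [[x0] [joins _]]]].
  destruct (maximal_above T le po fin (fun _ => True) x0 I) as [t [_ [_ tmax]]].
  exists t. intro x. destruct (joins x t) as [j [hxj [htj _]]].
  rewrite <- (tmax j I htj). exact hxj.
Qed.

Lemma finite_lattice_bot (T : Type) (le : T -> T -> Prop) :
  finite_lattice le -> exists b, forall x, le b x.
Proof.
  intros [po [fin [inh [joins meets]]]].
  apply (finite_lattice_top T (fun x y => le y x)).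
  split; [apply partial_order_flip; auto | split; [exact fin | split; [exact inh |]]].
  split; [exact meets | exact joins].
Qed.

Section SlimSemimodular.
Variables (L : Type) (le : L -> L -> Prop).
Hypothesis hL : slim_semimodular_lattice le.

Let po : partial_order le := proj1 (proj1 hL).
Let fin : finite_type L := proj1 (proj2 (proj1 hL)).
Let joins : forall x y, exists j, is_join le x y j := proj1 (proj2 (proj2 (proj2 (proj1 hL)))).
Let meets : forall x y, exists m, is_meet le x y m := proj2 (proj2 (proj2 (proj2 (proj1 hL)))).
Let hslim : slim le := proj1 (proj2 hL).
Let hsemimod : semimodular le := proj2 (proj2 hL).

Local Notation refl := (po_refl L le po).
Local Notation anti := (po_anti L le po).
Local Notation trans := (po_trans L le po).

Lemma cover_is_meet x y m : covers le x y -> le x m -> ~ le y m -> is_meet le y m x.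
Proof.
  intros [[hxy hne] hc] hxm hym.
  destruct (meets y m) as [w [w1 [w2 w3]]].
  assert (hw : w = x).
  { destruct (hc w (w3 x hxy hxm) w1) as [e|e]; auto. subst w. contradiction. }
  subst w. repeat split; auto.
Qed.

(* Semimodularity: if [m1 < m2] both separated [x] from [y], then [y \/ m1]
   would cover [m1], and [m2 /\ (y \/ m1)] would be a meet decomposition of [m1]. *)
Lemma cover_separator_chain x y m1 m2 : covers le x y -> meet_irreducible le m1 ->
  le x m1 -> ~ le y m1 -> ~ le y m2 -> le m1 m2 -> m1 = m2.
Proof.
  intros hc hm1 hx1 hy1 hy2 h12. apply NNPP. intro hne.
  destruct (joins y m1) as [w hw].
  assert (hj1 : is_join le x m1 m1) by (repeat split; auto; apply refl).
  destruct (hsemimod x y m1 m1 w hc hj1 hw) as [e|hcw].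
  { subst w. apply hy1, hw. }
  destruct (meets m2 w) as [v [v1 [v2 v3]]].
  destruct (proj2 hcw v (v3 m1 h12 (proj1 (proj2 hw))) v2) as [-> | ->].
  - destruct (hm1 m2 w) as [e|e]; [repeat split; auto | auto |].
    subst w. apply hy1, hw.
  - apply hy2, (trans _ w); auto. apply hw.
Qed.

(* Slimness: otherwise a join-irreducible below [y] but not [x], and two
   join-irreducibles separating [m1] and [m2], would form a 3-antichain. *)
Lemma cover_separator_unique x y m1 m2 : covers le x y ->
  meet_irreducible le m1 -> meet_irreducible le m2 ->
  le x m1 -> ~ le y m1 -> le x m2 -> ~ le y m2 -> m1 = m2.
Proof.
  intros hc hm1 hm2 hx1 hy1 hx2 hy2. apply NNPP. intro hne.
  assert (n12 : ~ le m1 m2) by (intro c; apply hne, (cover_separator_chain x y); auto).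
  assert (n21 : ~ le m2 m1) by (intro c; apply hne; symmetry; apply (cover_separator_chain x y); auto).
  pose proof hc as [[hxy hxne] hcc].
  assert (nyx : ~ le y x) by (intro c; apply hxne, anti; auto).
  destruct (join_irreducible_below L le po fin y x nyx) as [j [jj [jy jx]]].
  destruct (join_irreducible_below L le po fin m1 m2 n12) as [j1 [jj1 [j1m1 j1m2]]].
  destruct (join_irreducible_below L le po fin m2 m1 n21) as [j2 [jj2 [j2m2 j2m1]]].
  assert (j_not_below : forall m, le x m -> ~ le y m -> ~ le j m).
  { intros m h1 h2 c. destruct (joins x j) as [w [w1 [w2 w3]]].
    destruct (hcc w w1 (w3 y hxy jy)) as [->| ->]; auto. }
  assert (below_j : forall m, le x m -> ~ le y m -> forall j', le j' m -> le j' j -> le j' x).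
  { intros m h1 h2 j' hj'm hj'j. apply (cover_is_meet x y m hc h1 h2); auto.
    apply (trans _ j); auto. }
  apply hslim. exists j, j1, j2. repeat split; auto; intro c.
  - apply (j_not_below m1); auto. apply (trans _ j1); auto.
  - apply j1m2, (trans _ x); auto. apply (below_j m1); auto.
  - apply (j_not_below m2); auto. apply (trans _ j2); auto.
  - apply j2m1, (trans _ x); auto. apply (below_j m2); auto.
  - apply j1m2, (trans _ j2); auto.
  - apply j2m1, (trans _ j1); auto.
Qed.

Definition mlabel x m := meet_irreducible le m /\ ~ le x m.

Lemma le_mlabel x y : le x y <-> forall m, mlabel x m -> mlabel y m.
Proof.
  split.
  - intros h m [h1 h2]. split; auto. intro c. apply h2, (trans _ y); auto.
  - intro h. apply NNPP. intro c.
    destruct (meet_irreducible_above L le po fin x y c) as [m [h1 [h2 h3]]].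
    destruct (h m (conj h1 h3)) as [_ h4]. auto.
Qed.

Lemma mlabel_join a b j m : is_join le a b j -> (mlabel j m <-> mlabel a m \/ mlabel b m).
Proof.
  intros [h1 [h2 h3]]. unfold mlabel. split.
  - intros [hm hn]. apply NNPP. intro c. apply hn, h3; apply NNPP; intro d; apply c; auto.
  - intros [[hm hn]|[hm hn]]; split; auto; intro c; apply hn, (trans _ j); auto.
Qed.

Lemma mlabel_cover x y : covers le x y ->
  exists m, mlabel y m /\ ~ mlabel x m /\ forall m', mlabel y m' -> ~ mlabel x m' -> m' = m.
Proof.
  intros hc. pose proof hc as [[hxy hne] hcc].
  assert (nyx : ~ le y x) by (intro c; apply hne, anti; auto).
  destruct (meet_irreducible_above L le po fin y x nyx) as [m [h1 [h2 h3]]].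
  exists m. split; [split; auto|split]; [intros [_ c]; auto|].
  intros m' [hm' hy'] hx'. assert (hxm' : le x m') by (apply NNPP; intro c; apply hx'; split; auto).
  apply (cover_separator_unique x y m' m); auto.
Qed.

End SlimSemimodular.

Definition adds_one_label (n : nat) (S S' : nat -> Prop) :=
  exists t, t < n /\ ~ S t /\ S' t /\ forall k, k < n -> (S' k <-> S k \/ k = t).

Definition labelled_path {L : Type} (n : nat) (P : L -> nat -> Prop) (w : nat -> L) :=
  (forall k, k < n -> ~ P (w 0) k /\ P (w n) k) /\
  (forall a, a < n -> adds_one_label n (P (w a)) (P (w (S a)))).

Record two_path_rep {L : Type} (le : L -> L -> Prop) n (P : L -> nat -> Prop)
  (u v : nat -> L) : Prop := {
  rep_le : forall x y, le x y <-> forall k, k < n -> P x k -> P y k;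
  rep_join : forall a b j, is_join le a b j -> forall k, P j k <-> P a k \/ P b k;
  rep_path_u : labelled_path n P u;
  rep_path_v : labelled_path n P v;
  rep_span : forall x, exists a b, a <= n /\ b <= n /\ is_join le (u a) (v b) x }.

Arguments rep_le {L le n P u v}.
Arguments rep_join {L le n P u v}.
Arguments rep_path_u {L le n P u v}.
Arguments rep_path_v {L le n P u v}.
Arguments rep_span {L le n P u v}.

Section Representation.
Variables (L : Type) (le : L -> L -> Prop).
Hypothesis hL : slim_semimodular_lattice le.
Variables (top bot : L).
Hypotheses (htop : forall x, le x top) (hbot : forall x, le bot x).

Let po : partial_order le := proj1 (proj1 hL).
Let fin : finite_type L := proj1 (proj2 (proj1 hL)).
Let joins : forall x y, exists j, is_join le x y j := proj1 (proj2 (proj2 (proj2 (proj1 hL)))).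
Local Notation refl := (po_refl L le po).
Local Notation anti := (po_anti L le po).
Local Notation trans := (po_trans L le po).
Local Notation mlabel := (mlabel L le).

Definition cover_label x y := epsilon (inhabits top) (fun m => mlabel y m /\ ~ mlabel x m).

Lemma cover_label_spec x y : covers le x y ->
  mlabel y (cover_label x y) /\ ~ mlabel x (cover_label x y) /\
  forall m, mlabel y m -> ~ mlabel x m -> m = cover_label x y.
Proof.
  intro hc. destruct (mlabel_cover L le hL x y hc) as [m [h1 [h2 h3]]].
  assert (spec : mlabel y (cover_label x y) /\ ~ mlabel x (cover_label x y))
    by (apply (epsilon_spec (inhabits top) (fun m => mlabel y m /\ ~ mlabel x m)); eauto).
  destruct spec as [s1 s2]. split; [auto | split; [auto |]].
  intros m' h1' h2'. rewrite (h3 m' h1' h2'). symmetry. apply h3; auto.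
Qed.

Section MaximalChain.
Variables (k : nat) (w : nat -> L).
Hypotheses (hw0 : w 0 = bot) (hwk : w k = top) (hcov : cover_path le k w).

Local Notation lab a := (cover_label (w a) (w (S a))).

Lemma path_mono a b : a <= b -> b <= k -> le (w a) (w b).
Proof.
  intros hab hb. induction hab as [|b hab IH]; [apply refl|].
  apply (trans _ (w b)); [apply IH; lia | apply (hcov b ltac:(lia))].
Qed.

Lemma path_label_in a b : a < b -> b <= k -> mlabel (w b) (lab a).
Proof.
  intros hab hb. apply (proj1 (le_mlabel L le hL (w (S a)) (w b))); [apply path_mono; lia|].
  apply cover_label_spec, hcov; lia.
Qed.

Lemma path_label_enum a m : a <= k -> mlabel (w a) m -> exists b, b < a /\ lab b = m.
Proof.
  induction a as [|a IH]; intros ha hm.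
  - rewrite hw0 in hm. destruct hm as [_ c]. exfalso; auto.
  - destruct (classic (mlabel (w a) m)) as [c|c].
    + destruct (IH ltac:(lia) c) as [b [? ?]]. exists b. split; [lia|auto].
    + exists a. split; [lia|]. symmetry. apply (cover_label_spec _ _ (hcov a ltac:(lia))); auto.
Qed.

Lemma path_label_inj a b : a < k -> b < k -> lab a = lab b -> a = b.
Proof.
  intros ha hb e. destruct (Nat.lt_total a b) as [h|[h|h]]; auto; exfalso.
  - apply (proj1 (proj2 (cover_label_spec _ _ (hcov b hb)))). rewrite <- e. apply path_label_in; lia.
  - apply (proj1 (proj2 (cover_label_spec _ _ (hcov a ha)))). rewrite e. apply path_label_in; lia.
Qed.

End MaximalChain.

(* The labels of a maximal chain enumerate the m-labels of [top] without repetition. *)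
Lemma cover_path_length_le k1 k2 w1 w2 :
  w1 0 = bot -> w1 k1 = top -> cover_path le k1 w1 ->
  w2 0 = bot -> w2 k2 = top -> cover_path le k2 w2 -> k1 <= k2.
Proof.
  intros a1 a2 a3 b1 b2 b3.
  set (lab1 := fun a => cover_label (w1 a) (w1 (S a))).
  set (lab2 := fun a => cover_label (w2 a) (w2 (S a))).
  rewrite <- (length_seq k1 0), <- (length_map lab1), <- (length_seq k2 0), <- (length_map lab2).
  apply NoDup_incl_length.
  - apply NoDup_map_NoDup_ForallPairs; [|apply seq_NoDup].
    intros a b ha hb e. apply in_seq in ha, hb. apply (path_label_inj k1 w1 a3); auto; lia.
  - intros m hm. apply in_map_iff in hm. destruct hm as [a [<- ha]]. apply in_seq in ha.
    destruct (path_label_enum k2 w2 b1 b3 k2 (lab1 a)) as [b [hb e]]; auto.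
    + rewrite b2, <- a2. apply (path_label_in k1 w1 a3); lia.
    + apply in_map_iff. exists b. split; auto. apply in_seq; lia.
Qed.

Section TwoMaximalChains.
Variables (n : nat) (u v : nat -> L).
Hypotheses (hu0 : u 0 = bot) (hun : u n = top) (hu : cover_path le n u).
Hypotheses (hv0 : v 0 = bot) (hvn : v n = top) (hv : cover_path le n v).

Let mu k := cover_label (u k) (u (S k)).
Let P x k := mlabel x (mu k).

Lemma mlabel_top_enum m : mlabel top m -> exists k, k < n /\ mu k = m.
Proof. intro hm. apply (path_label_enum n u hu0 hu n); auto. rewrite hun; auto. Qed.

Lemma labelled_path_mu w : w 0 = bot -> w n = top -> cover_path le n w -> labelled_path n P w.
Proof.
  intros hw0 hwn hw. split.
  - intros k hk. rewrite hw0, hwn, <- hun. split; [intros [_ c]; auto|].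
    apply (path_label_in n u hu); lia.
  - intros a ha. destruct (cover_label_spec _ _ (hw a ha)) as [s1 [s2 s3]].
    destruct (mlabel_top_enum (cover_label (w a) (w (S a)))) as [t [ht et]].
    { rewrite <- hwn. apply (path_label_in n w hw); lia. }
    exists t. unfold P. rewrite et. split; [auto | split; [auto | split; [auto |]]].
    intros k hk. split.
    + intro h. destruct (classic (mlabel (w a) (mu k))) as [c|c]; [left; auto | right].
      apply (path_label_inj n u hu); auto. fold (mu k) (mu t). rewrite et. apply s3; auto.
    + intros [h| ->]; [|rewrite et; auto].
      apply (proj1 (le_mlabel L le hL (w a) (w (S a)))); auto. apply hw; auto.
Qed.

Lemma rep_le_mu x y : le x y <-> forall k, k < n -> P x k -> P y k.
Proof.
  rewrite (le_mlabel L le hL). split; [intros h k _; apply h|].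
  intros h m hm. destruct (mlabel_top_enum m) as [k [hk <-]]; [|apply h; auto].
  apply (proj1 (le_mlabel L le hL x top)); auto.
Qed.

(* An element is the join of the largest members of [u] and [v] below it,
   as the join-irreducibles, which lie on [u] or [v], separate elements. *)
Lemma join_of_paths (C D : L -> Prop) :
  (forall z, join_irreducible le z -> C z \/ D z) ->
  (forall z, C z -> exists a, a <= n /\ u a = z) -> (forall z, D z -> exists b, b <= n /\ v b = z) ->
  forall x, exists a b, a <= n /\ b <= n /\ is_join le (u a) (v b) x.
Proof.
  intros hCD hC hD x.
  destruct (nat_greatest (fun a => le (u a) x) n) as [a [ha [hax hamax]]]; [rewrite hu0; auto|].
  destruct (nat_greatest (fun b => le (v b) x) n) as [b [hb [hbx hbmax]]]; [rewrite hv0; auto|].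
  exists a, b. split; auto. split; auto.
  destruct (joins (u a) (v b)) as [j hj].
  replace x with j; auto. apply anti; [apply hj; auto|].
  apply NNPP. intro c.
  destruct (join_irreducible_below L le po fin x j c) as [z [hz [hzx hzj]]].
  apply hzj. destruct (hCD z hz) as [hc|hd].
  - destruct (hC z hc) as [a' [ha' <-]]. apply (trans _ (u a)); [|apply hj].
    destruct (Nat.le_gt_cases a' a) as [h|h]; [apply (path_mono n u hu); auto|].
    exfalso. apply (hamax a'); auto.
  - destruct (hD z hd) as [b' [hb' <-]]. apply (trans _ (v b)); [|apply hj].
    destruct (Nat.le_gt_cases b' b) as [h|h]; [apply (path_mono n v hv); auto|].
    exfalso. apply (hbmax b'); auto.
Qed.

End TwoMaximalChains.

Lemma slim_semimodular_rep : exists n P u v, two_path_rep le n P u v.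
Proof.
  assert (h3 : width_le2 le (join_irreducible le)).
  { intros [a [b [c h]]]. apply (proj1 (proj2 hL)). exists a, b, c. tauto. }
  destruct (two_chain_cover_exists L le po fin _ h3)
    as [C [D [hC [hD [_ [_ hCD]]]]]].
  destruct (cover_path_through L le po fin top htop C bot hC)
    as [n [u [u0 [un [ucov uC]]]]]; auto.
  destruct (cover_path_through L le po fin top htop D bot hD)
    as [n' [v [v0 [vn [vcov vD]]]]]; auto.
  assert (n' = n) as ->.
  { apply Nat.le_antisymm;
      [apply (cover_path_length_le n' n v u) | apply (cover_path_length_le n n' u v)]; auto. }
  exists n, (fun x k => mlabel x (cover_label (u k) (u (S k)))), u, v. split.
  - apply (rep_le_mu n u u0 un ucov).
  - intros a b j hj k. apply (mlabel_join L le hL); auto.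
  - apply (labelled_path_mu n u u0 un ucov); auto.
  - apply (labelled_path_mu n u u0 un ucov); auto.
  - apply (join_of_paths n u v u0 ucov v0 vcov C D); auto.
Qed.

End Representation.

Lemma order_isomorphic_of_embedding (X Y : Type) (leX : X -> X -> Prop) (leY : Y -> Y -> Prop)
  (f : X -> Y) : partial_order leX -> inhabited X -> (forall y, exists x, f x = y) ->
  (forall x1 x2, leX x1 x2 <-> leY (f x1) (f x2)) -> order_isomorphic leX leY.
Proof.
  intros po inh hsurj hle.
  set (g := fun y => epsilon inh (fun x => f x = y)).
  assert (fg : forall y, f (g y) = y) by (intro y; apply (epsilon_spec inh (fun x => f x = y)), hsurj).
  exists f, g. split; [|split]; auto.
  intro x. apply (po_anti X leX po); apply hle; rewrite fg; apply hle, (po_refl X leX po).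
Qed.

(** * Composition series of a cyclic group *)

From mathcomp Require Import ssreflect ssrfun ssrbool eqtype ssrnat div prime fintype bigop seq zmodp.

Section ProductOfPrimes.
Variables (n : nat) (p : nat -> nat).
Hypotheses (hp : forall k, prime (p k)) (hinj : forall k l, p k = p l -> k = l).

Definition prod_primes := \prod_(0 <= i < n) p i.
Definition prod_primes_but k := \prod_(0 <= i < n | i != k) p i.

Lemma prime_ndvd_prod (r : seq nat) (P : pred nat) m :
  (forall i, i \in r -> P i -> i != m) -> ~~ (p m %| \prod_(i <- r | P i) p i).
Proof.
  elim: r => [|a r IH] h.
  - rewrite big_nil dvdn1. apply/eqP => e. move: (prime_gt1 (hp m)). by rewrite e.
  - rewrite big_cons. have IH' : ~~ (p m %| \prod_(i <- r | P i) p i).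
      by apply: IH => i hi; apply: h; rewrite in_cons hi orbT.
    case hPa: (P a) => //. rewrite Euclid_dvdM // negb_or IH' andbT dvdn_prime2 //.
    apply/eqP => /hinj e. by move: (h a (mem_head _ _) hPa); rewrite e eqxx.
Qed.

Lemma prod_primes_split k : k < n -> prod_primes = p k * prod_primes_but k.
Proof. move=> hk. apply: bigD1_seq; by [rewrite mem_index_iota | exact: iota_uniq]. Qed.

Lemma prime_dvd_prod_primes k : k < n -> p k %| prod_primes.
Proof. move=> hk. rewrite (prod_primes_split k hk). exact: dvdn_mulr. Qed.

Lemma prime_dvd_prod_primes_but l k : l < n -> l != k -> p l %| prod_primes_but k.
Proof.
  move=> hl hlk. rewrite /prod_primes_but -big_filter (bigD1_seq l) ?dvdn_mulr //.
  - by rewrite mem_filter hlk mem_index_iota.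
  - exact/filter_uniq/iota_uniq.
Qed.

Lemma prime_ndvd_prod_primes_but k : ~~ (p k %| prod_primes_but k).
Proof. by apply: prime_ndvd_prod => i _. Qed.

Lemma prod_primes_but_lt k : k < n -> prod_primes_but k < prod_primes.
Proof.
  move=> hk. rewrite (prod_primes_split k hk) -{1}(mul1n (prod_primes_but k)) ltn_pmul2r.
  - exact: prime_gt1.
  - by apply: prodn_gt0 => i; apply: prime_gt0.
Qed.

Lemma prod_primes_dvd x : (forall k, k < n -> p k %| x) -> prod_primes %| x.
Proof.
  move=> h. suff : forall m, m <= n -> \prod_(0 <= i < m) p i %| x by apply.
  elim => [|m IH] hm; first by rewrite big_nil dvd1n.
  rewrite big_nat_recr //= Gauss_dvd ?IH ?h ?(ltnW hm) //.
  rewrite coprime_sym prime_coprime //. apply: prime_ndvd_prod => i.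
  by rewrite mem_index_iota => /andP [_ hi] _; rewrite neq_ltn hi.
Qed.

End ProductOfPrimes.

(* [Z / (m+1) Z]; the shift keeps the modulus positive. *)
Definition zgroup (m : nat) : group :=
  @Group 'I_m.+1 (@Zp_add m.+1) (@Zp0 m) (@Zp_opp m.+1)
    (@Zp_addA m.+1) (@Zp_add0z m) (@Zp_addNz m).

Section ZGroup.
Variable m : nat.
Local Notation G := (zgroup m).

Lemma zgroup_val_mul (x y : G) : val (gmul G x y) = (val x + val y) %% m.+1.
Proof. by []. Qed.

Lemma zgroup_val_inv (x : G) : val (ginv G x) = (m.+1 - val x) %% m.+1.
Proof. by []. Qed.

Lemma zgroup_val_pow (g : G) c : val (gpow g c) = (val g * c) %% m.+1.
Proof.
  elim: c => [|c IH] /=; first by rewrite muln0 mod0n.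
  by rewrite IH modnDmr mulnS.
Qed.

Lemma zgroup_finite : finite_type G.
Proof.
  exists (List.map (fun i => inZp i : 'I_m.+1) (List.seq 0 m.+1)) => x.
  apply/List.in_map_iff. exists (val x). split; first exact: valZpK.
  apply/List.in_seq. split; first exact: le_0_n. exact/ltP/ltn_ord.
Qed.

Lemma zgroup_cyclic : cyclic_group G.
Proof.
  exists (inZp 1 : 'I_m.+1) => x. exists (val x). left. apply: val_inj.
  by rewrite zgroup_val_pow /= modnMml mul1n modn_small.
Qed.

End ZGroup.

Section PrimeSubgroups.
Variables (n : nat) (p : nat -> nat).
Hypotheses (hp : forall k, prime (p k)) (hinj : forall k l, p k = p l -> k = l).

Local Notation N := (prod_primes n p).
Local Notation G := (zgroup N.-1).

Lemma prod_primes_pos : N.-1.+1 = N.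
Proof. by rewrite prednK //; apply: prodn_gt0 => i; apply: prime_gt0. Qed.

Definition zsub (D : nat -> Prop) : G -> Prop :=
  fun x => forall k, k < n -> D k -> p k %| val x.

Lemma modn_prod_primes k d : k < n -> d %% N.-1.+1 = d %[mod p k].
Proof. move=> hk. by rewrite prod_primes_pos modn_dvdm // prime_dvd_prod_primes. Qed.

Lemma dvd_mod_prod_primes k d : k < n -> (p k %| d %% N.-1.+1) = (p k %| d).
Proof. by move=> hk; rewrite /dvdn modn_prod_primes. Qed.

Lemma zsub_subgroup D : subgroup (zsub D).
Proof.
  split; [|split].
  - by move=> k _ _; rewrite dvdn0.
  - move=> x y hx hy k hk hD. rewrite zgroup_val_mul dvd_mod_prod_primes //.
    by apply: dvdn_add; [exact: hx | exact: hy].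
  - move=> x hx k hk hD. rewrite zgroup_val_inv dvd_mod_prod_primes //.
    apply: dvdn_sub; last exact: hx.
    by rewrite prod_primes_pos; apply: prime_dvd_prod_primes.
Qed.

Lemma zsub_full (D : nat -> Prop) x : (forall k, (k < n)%coq_nat -> D k) -> zsub D x -> x = gone G.
Proof.
  move=> hD hx. apply: val_inj => /=.
  have hdvd : N %| val x
    by apply: (prod_primes_dvd n p hp hinj) => k hk; apply: hx => //; apply/hD/ltP.
  have hlt : val x < N by rewrite -[X in _ < X]prod_primes_pos; exact: ltn_ord.
  case: (posnP (val x)) => // hpos. by move: hdvd; rewrite gtnNdvd.
Qed.

Lemma zsub_witness k : k < n -> exists x : G, val x = prod_primes_but n p k.
Proof.
  move=> hk. exists (inZp (prod_primes_but n p k)).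
  by rewrite /= modn_small // prod_primes_pos prod_primes_but_lt.
Qed.

Lemma zsub_reflect D D' : Defs.subset (zsub D) (zsub D') -> forall k, k < n -> D' k -> D k.
Proof.
  move=> h k hk hD'. apply: NNPP => hD.
  have [x hx] := zsub_witness k hk.
  have : zsub D x.
  { move=> l hl hDl. rewrite hx prime_dvd_prod_primes_but //.
    by apply/eqP => e; subst l. }
  move/h/(_ k hk hD'). by rewrite hx (negPf (prime_ndvd_prod_primes_but n p hp hinj k)).
Qed.

Lemma zsub_bezout S t (y z : G) : t < n -> zsub S y -> zsub S z -> ~~ (p t %| val y) ->
  exists w c, zsub (fun k => S k \/ k = t) w /\ gmul G w (gpow y c) = z.
Proof.
  move=> ht hy hz hty.
  have hy0 : 0 < val y by case: (posnP (val y)) hty => // ->; rewrite dvdn0.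
  have [km [kn hkm]] : exists km kn, km * val y = kn * p t + 1.
  { have hcop : coprime (val y) (p t) by rewrite coprime_sym prime_coprime.
    case: (egcdnP (p t) hy0) => km kn h _. exists km, kn. by rewrite h (eqP hcop). }
  set c := km * val z. set w := gmul G z (ginv G (gpow y c)).
  have ez : gmul G w (gpow y c) = z by rewrite /w gmulKVr.
  exists w, c. split => // k hk hSk.
  have e1 : (val w + val (gpow y c)) %% p k = val z %% p k.
  { by rewrite -[in RHS]ez zgroup_val_mul modn_prod_primes. }
  have e2 : val (gpow y c) %% p k = val z %% p k.
  { rewrite zgroup_val_pow modn_prod_primes //.
    case: hSk => [hSk | ->].
    - by rewrite (eqP (hz k hk hSk)) (eqP (dvdn_mulr _ (hy k hk hSk))).
    - have -> : val y * c = (kn * val z) * p t + val z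
        by rewrite /c mulnCA mulnA hkm mulnDl mul1n mulnAC.
      by rewrite modnMDl. }
  have := eqn_modDr (val (gpow y c)) (val w) 0 (p k).
  by rewrite e1 -e2 add0n eqxx mod0n /dvdn => /esym ->.
Qed.

Lemma zsub_step S S' : adds_one_label n S S' ->
  Defs.subset (zsub S') (zsub S) /\ normal_in (zsub S') (zsub S) /\
  simple_quotient (zsub S) (zsub S').
Proof.
  move=> [t [/ltP ht [hSt [hS't hiff]]]].
  have S_S' k : k < n -> S k -> S' k by move=> /ltP hk hk'; apply/hiff => //; left.
  have sub_S'S : Defs.subset (zsub S') (zsub S) by move=> x hx k hk /(S_S' k hk); apply: hx.
  split => //. split.
  { move=> x y _ hx. rewrite /= (Zp_addC x y) Zp_addA Zp_addNz Zp_add0z. exact: hx. }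
  split.
  { have [x hx] := zsub_witness t ht. exists x. split.
    - move=> k hk hSk. rewrite hx prime_dvd_prod_primes_but //.
      by apply/eqP => e; subst k.
    - move/(_ t ht hS't). by rewrite hx (negPf (prime_ndvd_prod_primes_but n p hp hinj t)). }
  move=> M hM hS'M hMS _.
  case: (classic (Defs.subset M (zsub S'))) => [hall|/(not_subset_witness G) [y [hMy hS'y]]].
  { by left => x; split; [apply: hall | apply: hS'M]. }
  right => z; split; first exact: hMS.
  have hty : ~~ (p t %| val y).
  { apply/negP => hd. apply: hS'y => k hk /(hiff k (elimT ltP hk)) [hSk|->] //.
    exact: (hMS y hMy k hk hSk). }
  move=> hz. have [w [c [hw <-]]] := zsub_bezout S t y z ht (hMS y hMy) hz hty.
  apply: (subgroupM G M hM); first apply: hS'M.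
  - by move=> k hk /(hiff k (elimT ltP hk)) hk'; apply: hw.
  - elim: c => [|c IH] /=; [exact: (subgroup1 G M hM) | exact: (subgroupM G M hM)].
Qed.
End PrimeSubgroups.

Fixpoint prime_seq k := if k is k'.+1 then sval (prime_above (prime_seq k')) else 2.

Lemma prime_seq_prime k : prime (prime_seq k).
Proof. case: k => [|k] //=. by case: (prime_above (prime_seq k)). Qed.

Lemma prime_seq_inj k l : prime_seq k = prime_seq l -> k = l.
Proof.
  have step c : prime_seq c < prime_seq c.+1 by rewrite /=; case: (prime_above (prime_seq c)).
  have mono a b : a < b -> prime_seq a < prime_seq b.
  { elim: b => [//|b IH]. rewrite ltnS leq_eqVlt; move=> /orP [/eqP ->|h]; first exact: step.
    exact: (ltn_trans (IH h) (step b)). }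
  move=> e. by case: (ltngtP k l) => // /mono; rewrite e ltnn.
Qed.

Section CyclicRealisation.
Variables (L : Type) (le : L -> L -> Prop) (n : nat) (P : L -> nat -> Prop) (u v : nat -> L).
Hypotheses (hL : slim_semimodular_lattice le) (hrep : two_path_rep le n P u v).

Local Notation G := (zgroup (prod_primes n prime_seq).-1).
Local Notation zsub := (zsub n prime_seq).
Local Notation zsub_of x := (zsub (P x)).

(* The larger the element, the more labels, the smaller the subgroup. *)
Definition path_series (w : nat -> L) (i : nat) : G -> Prop := zsub_of (w (n - i)).

Lemma path_series_cs w : labelled_path n P w -> composition_series n (path_series w).
Proof.
  move=> [hends hstep]. split; [|split; [|split]].
  - move=> x. rewrite /path_series subn0. split.
    + apply: (zsub_full n prime_seq prime_seq_prime prime_seq_inj) => k hk.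
      exact: (proj2 (hends k hk)).
    + by move=> -> k _ _; rewrite dvdn0.
  - move=> x k hk. rewrite /path_series subnn => hP. by case: (hends k (elimT ltP hk)).
  - move=> i _. exact: (zsub_subgroup n prime_seq prime_seq_prime).
  - move=> i /ltP hi. rewrite /path_series -subnSK //.
    apply: (zsub_step n prime_seq prime_seq_prime prime_seq_inj).
    apply: hstep. apply/ltP. by rewrite ltn_subrL ltn0Sn (leq_ltn_trans (leq0n i) hi).
Qed.

Lemma le_zsub x y : le x y <-> Defs.subset (zsub_of y) (zsub_of x).
Proof.
  rewrite (rep_le hrep). split.
  - move=> h g hg k hk hPx. exact: (hg k hk (h k (elimT ltP hk) hPx)).
  - move=> h k /ltP hk. exact: (zsub_reflect n prime_seq prime_seq_prime prime_seq_inj _ _ h).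
Qed.

Lemma zsub_join a b x : is_join le a b x -> zsub_of x = (fun g => zsub_of a g /\ zsub_of b g).
Proof.
  move=> hj. apply: functional_extensionality => g. apply: propositional_extensionality.
  split.
  - move=> h; split => k hk hP; apply: h => //; apply/(rep_join hrep _ _ _ hj k); by [left | right].
  - move=> [ha hb] k hk /(rep_join hrep _ _ _ hj k) [hP|hP]; [exact: ha | exact: hb].
Qed.

Lemma zsub_in_csl x : exists i j, (i <= n)%coq_nat /\ (j <= n)%coq_nat /\
  zsub_of x = (fun g => path_series u i g /\ path_series v j g).
Proof.
  have [a [b [/leP ha [/leP hb hj]]]] := rep_span hrep x.
  exists (n - a), (n - b). split; [exact/leP/leq_subr | split; first exact/leP/leq_subr].
  by rewrite /path_series !subKn //; apply: zsub_join.
Qed.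

Definition zsub_csl x : CSL n (path_series u) (path_series v) := exist _ (zsub_of x) (zsub_in_csl x).

Lemma zsub_csl_surj A : exists x, zsub_csl x = A.
Proof.
  case: A => [a [i [j [hi [hj ea]]]]].
  have [x hx] := proj1 (proj2 (proj2 (proj2 (proj1 hL)))) (u (n - i)) (v (n - j)).
  exists x. apply: csl_eq => g /=. by rewrite ea (zsub_join _ _ _ hx).
Qed.

Lemma csl_realisation : order_isomorphic le (@CSL_dual_le G n (path_series u) (path_series v)).
Proof.
  apply: (order_isomorphic_of_embedding _ _ _ _ zsub_csl (proj1 (proj1 hL))).
  - exact: (inhabits (u 0)).
  - exact: zsub_csl_surj.
  - move=> x y. exact: le_zsub.
Qed.

End CyclicRealisation.

Theorem slim_semimodular_cyclic_csl (L : Type) (le : L -> L -> Prop) :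
  slim_semimodular_lattice le ->
  exists (G : group) (n : nat) (H K : nat -> G -> Prop),
    finite_type G /\ cyclic_group G /\ composition_series n H /\ composition_series n K /\
    order_isomorphic le (@CSL_dual_le G n H K).
Proof.
  move=> hL.
  have [top htop] := finite_lattice_top L le (proj1 hL).
  have [bot hbot] := finite_lattice_bot L le (proj1 hL).
  have [n [P [u [v hrep]]]] := slim_semimodular_rep L le hL top bot htop hbot.
  exists (zgroup (prod_primes n prime_seq).-1), n, (path_series L n P u), (path_series L n P v).
  split; first exact: zgroup_finite.
  split; first exact: zgroup_cyclic.
  split; first exact/path_series_cs/(rep_path_u hrep).
  split; first exact/path_series_cs/(rep_path_v hrep).
  exact: (csl_realisation L le n P u v hL hrep).
Qed.

Theorem corollary3p5 :
  (forall (L : Type) (leL : L -> L -> Prop),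
     slim_semimodular_lattice leL ->
     exists (G : group) (n : nat) (H K : nat -> G -> Prop),
       finite_type G /\ cyclic_group G /\
       composition_series n H /\ composition_series n K /\
       order_isomorphic leL (@CSL_dual_le G n H K))
  /\
  (forall (G : group) (n : nat) (H K : nat -> G -> Prop),
     composition_series n H -> composition_series n K ->
     slim_semimodular_lattice (@CSL_dual_le G n H K)).
Proof.
  split; [exact: slim_semimodular_cyclic_csl | exact: csl_slim_semimodular].
Qed.
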